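(* Let $n\ge 1$ and $k\ge 1$ be integers and set $m=n+2k$. Let $L=\{x_1,\dots,x_n\}$ and $L'=\{y_1,\dots,y_m\}$ be finite sets of cells, and let there be $2k+1$ actions $u_1,\dots,u_{2k+1}$ such that applying action $u_j$ at cell $x_i$ leads to cell $y_{i+j-1}$. Define action probabilities $$p(x_i,u_1)=\frac{n-i+1}{m},\qquad p(x_i,u_j)=\frac{1}{m}\ (2\le j\le 2k),\qquad p(x_i,u_{2k+1})=\frac{i}{m}.$$ Then (1) $\sum_{j=1}^{2k+1} p(x_i,u_j)=1$ for every $i\in\{1,\dots,n\}$, and (2) if the distribution on $L$ is uniform, $p(x_i)=1/n$ for all $i$, then the induced distribution on $L'$, given by $p(y_l)=\sum_{i=1}^n\sum_{j:\, i+j-1=l} p(x_i,u_j)\,p(x_i)$, satisfies $p(y_l)=1/m$ for every $l\in\{1,\dots,m\}$.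
   Context: This models the one-dimensional system $x_{t+1}=x_t+u$ with $u\in[-1,1]$, where two consecutive reachable level sets $L$ (at time $t$) and $L'$ (at time $t+1$) are discretized into consecutive cells of equal length, $L$ having $n$ cells and $L'$ having $n+2k$ cells, and $2k+1$ uniformly spaced control inputs shift a cell by $-k,\dots,k$ cells. A level set is C-uniform if the probability distribution of the robot's state over its cells is uniform. *)

From mathcomp Require Import all_boot all_order all_algebra.
Set Implicit Arguments. Unset Strict Implicit. Unset Printing Implicit Defensive.
Import Order.TTheory GRing.Theory Num.Theory.
Local Open Scope ring_scope.

(* Cells x_1..x_n of L, y_1..y_m of L' (m = n + 2k), actions u_1..u_{2k+1};
   all indices are 1-based natural numbers. Action u_j at x_i leads to y_{i+j-1}. *)

Definition mcells (n k : nat) : nat := (n + 2 * k)%N.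

Definition p_act (R : realFieldType) (n k i j : nat) : R :=
  if j == 1%N then (n - i + 1)%:R / (mcells n k)%:R
  else if j == (2 * k + 1)%N then i%:R / (mcells n k)%:R
  else 1 / (mcells n k)%:R.

Definition p_induced (R : realFieldType) (n k : nat) (px : nat -> R) (l : nat) : R :=
  \sum_(1 <= i < n.+1) \sum_(1 <= j < (2 * k + 1).+1 | (i + j - 1)%N == l)
     p_act R n k i j * px i.

From mathcomp Require Import all_boot all_order all_algebra zify.
Import Order.TTheory GRing.Theory Num.Theory.

(* Scaled by m, the action probabilities become integer weights.  Fix a target
   cell y_l and send each t in {1..n} to the source cell x_c, where c is t
   clamped into [l - 2k, l].  The fibre over x_i has exactly m p(x_i, u_(l+1-i))
   elements: the n - i + 1 cells t >= l when i = l, the i cells t <= l - 2k when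
   i = l - 2k, and t = i alone in between.  So m n p(y_l) counts {1..n} once. *)

Definition act_weight (n k i j : nat) : nat :=
  if j == 1%N then (n - i + 1)%N else if j == (2 * k + 1)%N then i else 1%N.

Definition clamp (a b t : nat) : nat := minn b (maxn t a).

Section Counting.
Local Open Scope nat_scope.

Lemma card_nat_ge (a b c : nat) : a <= c <= b ->
  \sum_(a <= t < b | c <= t) 1 = b - c.
Proof.
case/andP=> ac cb; rewrite (big_cat_nat ac cb) /= big_nat_cond big_pred0 => [|t]; last by lia.
rewrite add0n -[RHS]muln1 -sum_nat_const_nat big_mkcond.
by apply: eq_big_nat => t /andP[->].
Qed.

Lemma card_nat_lt (a b c : nat) : a <= c <= b ->
  \sum_(a <= t < b | t < c) 1 = c - a.
Proof.
case/andP=> ac cb; rewrite (big_cat_nat ac cb) /=.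
rewrite [X in _ + X]big_nat_cond [X in _ + X]big_pred0 => [|t]; last by lia.
rewrite addn0 -[RHS]muln1 -sum_nat_const_nat big_mkcond.
by apply: eq_big_nat => t /andP[_ ->].
Qed.
End Counting.

Section Fibres.
Local Open Scope nat_scope.
Variables n k : nat.
Hypothesis k_gt0 : 0 < k.

Lemma act_weight_fibre (i j : nat) : 1 <= i <= n -> 1 <= j <= 2 * k + 1 ->
  act_weight n k i j =
  \sum_(1 <= t < n.+1 | clamp (i + j - 1 - 2 * k) (i + j - 1) t == i) 1.
Proof.
rewrite /act_weight /clamp => i_range j_range.
case: eqP => [-> | j_neq1].
  rewrite (eq_bigl (fun t => i <= t)) => [|t]; last by lia.
  by rewrite card_nat_ge; lia.
case: eqP => [-> | j_neq_last].
  rewrite (eq_bigl (fun t => t < i.+1)) => [|t]; last by lia.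
  by rewrite card_nat_lt; lia.
rewrite (eq_bigl (fun t => t == i)) => [|t]; last by lia.
by rewrite big_nat1_eq ifT; lia.
Qed.

Lemma induced_weight_sum (l : nat) : 1 <= l <= n + 2 * k ->
  \sum_(1 <= i < n.+1) \sum_(1 <= j < (2 * k + 1).+1 | i + j - 1 == l)
     act_weight n k i j = n.
Proof.
move=> l_range; pose src t := clamp (l - 2 * k) l t.
have src_range t : 1 <= t <= n -> 1 <= src t <= n by rewrite /src /clamp; lia.
transitivity (\sum_(1 <= i < n.+1) \sum_(1 <= t < n.+1 | src t == i) 1).
  apply: eq_big_nat => i i_range.
  rewrite big_nat_cond (eq_bigl (fun j => (1 <= j < (2 * k + 1).+1) && (j == l + 1 - i)));
    last by move=> j; lia.
  rewrite -big_nat_cond big_nat1_eq; case: ifP => j_range.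
    rewrite act_weight_fibre; [|lia|lia].
    by have -> : i + (l + 1 - i) - 1 = l by lia.
  by rewrite big_nat_cond big_pred0 // => t; rewrite /src /clamp; lia.
rewrite (exchange_big_dep_nat predT) //=.
transitivity (\sum_(1 <= t < n.+1) 1); last by rewrite sum_nat_const_nat subSS subn0 muln1.
apply: eq_big_nat => t t_range.
rewrite (eq_bigl (fun i => i == src t)) => [|i]; last exact: eq_sym.
by rewrite big_nat1_eq ifT //; move: (src_range t t_range); lia.
Qed.

Lemma act_weight_sum (i : nat) : i <= n ->
  \sum_(1 <= j < (2 * k + 1).+1) act_weight n k i j = n + 2 * k.
Proof.
move=> i_le_n; rewrite addn1 big_nat_recl // big_nat_recr /=; last by lia.
have middle : \sum_(1 <= j < 2 * k) act_weight n k i j.+1 = 2 * k - 1.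
  rewrite -[RHS]muln1 -sum_nat_const_nat.
  by apply: eq_big_nat => j j_range; rewrite /act_weight ifF ?ifF; lia.
by rewrite middle /act_weight /= ifF ?ifT; lia.
Qed.
End Fibres.

Local Open Scope ring_scope.

Lemma p_act_weight (R : realFieldType) (n k i j : nat) :
  p_act R n k i j = (act_weight n k i j)%:R / (mcells n k)%:R.
Proof. by rewrite /p_act /act_weight; case: ifP => // _; case: ifP. Qed.

Theorem mainTheorem1 (R : realFieldType) (n k : nat) :
  (1 <= n)%N -> (1 <= k)%N ->
  (forall i : nat, (1 <= i <= n)%N ->
     \sum_(1 <= j < (2 * k + 1).+1) p_act R n k i j = 1) /\
  (forall px : nat -> R,
     (forall i : nat, (1 <= i <= n)%N -> px i = 1 / n%:R) ->
     forall l : nat, (1 <= l <= mcells n k)%N ->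
       p_induced n k px l = 1 / (mcells n k)%:R).
Proof.
move=> n_gt0 k_gt0.
have m_neq0 : (mcells n k)%:R != 0 :> R by rewrite pnatr_eq0 /mcells; lia.
have n_neq0 : n%:R != 0 :> R by rewrite pnatr_eq0; lia.
split=> [i /andP[_ i_le_n] | px px_unif l l_range].
  under eq_bigr do rewrite p_act_weight.
  by rewrite -mulr_suml -natr_sum act_weight_sum ?divff.
transitivity (\sum_(1 <= i < n.+1) \sum_(1 <= j < (2 * k + 1).+1 | (i + j - 1)%N == l)
                (act_weight n k i j)%:R * ((mcells n k * n)%:R : R)^-1).
  apply: eq_big_nat => i i_range; apply: eq_bigr => j _.
  by rewrite p_act_weight px_unif // div1r natrM invfM mulrA.
under eq_bigr do rewrite -mulr_suml -natr_sum.
rewrite -mulr_suml -natr_sum induced_weight_sum //.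
by rewrite natrM invfM mulrCA divff // mulr1 div1r.
Qed.
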